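(* Let $n\ge 2$ and let $G$ be a labeled threshold graph on the vertex set $\{1,\dots,n\}$. Then there exists a unique threshold pair $(\pi,w)$ of size $n$ in standard form such that $G=T(\pi,w)$ (equality as labeled graphs).
   Context: A threshold graph is a graph obtainable from the empty graph by repeatedly adding a new vertex that is either adjacent to all existing vertices or to none. A labeled threshold graph on $n$ vertices is a threshold graph with vertex set $\{1,\dots,n\}$; two labeled graphs are equal if they have the same edge set. Let $\mathcal{S}_n$ be the set of permutations of $\{1,\dots,n\}$, written in one-line notation $\pi=\pi_1\pi_2\cdots\pi_n$. A threshold pair of size $n$ is a pair $(\pi,w)$ with $\pi\in\mathcal{S}_n$ and $w=w_1\cdots w_n\in\{+1,-1\}^n$. The graph $T(\pi,w)$ is defined as follows: $G_1$ is the graph with the single vertex $\pi_1$; for $2\le i\le n$, $G_i$ is obtained from $G_{i-1}$ by adding a new vertex $\pi_i$ which is adjacent to every vertex of $G_{i-1}$ if $w_i=+1$ and is isolated if $w_i=-1$; then $T(\pi,w)=G_n$. A threshold pair $(\pi,w)$ of size $n\ge 2$ is in standard form if $w_1=w_2$ and, for all $1\le i<n$, $w_i=w_{i+1}$ implies $\pi_i<\pi_{i+1}$. *)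

(* Vertices {1,...,n} are represented by 'I_n (label k+1 <-> ordinal k);
   this relabeling preserves the order of labels. *)
From mathcomp Require Import all_boot all_order all_fingroup.
Set Implicit Arguments. Unset Strict Implicit. Unset Printing Implicit Defensive.

Definition simple_graph (n : nat) (E : {set {set 'I_n}}) : Prop :=
  forall e, e \in E -> #|e| = 2.

Inductive threshold_on (n : nat) (E : {set {set 'I_n}}) : {set 'I_n} -> Prop :=
| threshold_nil : threshold_on E set0
| threshold_add (V : {set 'I_n}) (v : 'I_n) :
    v \notin V -> threshold_on E V ->
    ((forall u, u \in V -> [set v; u] \in E) \/ (forall u, u \in V -> [set v; u] \notin E)) ->
    threshold_on E (v |: V).

Definition threshold_graph (n : nat) (E : {set {set 'I_n}}) : Prop :=
  simple_graph E /\ threshold_on E [set: 'I_n].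

(* Threshold pair: pi a permutation, w a sign word (true = +1, false = -1),
   positions indexed by 'I_n (position j <-> index j+1 of the paper). *)
Definition step_edges (n : nat) (pi : {perm 'I_n}) (w : {ffun 'I_n -> bool}) (j : 'I_n)
  : {set {set 'I_n}} :=
  if w j then [set [set pi i; pi j] | i in [set i : 'I_n | (i < j)%N]] else set0.

Definition T (n : nat) (pi : {perm 'I_n}) (w : {ffun 'I_n -> bool}) : {set {set 'I_n}} :=
  \bigcup_(j : 'I_n) step_edges pi w j.

Definition standard_form (n : nat) (pi : {perm 'I_n}) (w : {ffun 'I_n -> bool}) : Prop :=
  (forall i j : 'I_n, val i = 0 -> val j = 1 -> w i = w j) /\
  (forall i j : 'I_n, val j = (val i).+1 -> w i = w j -> (pi i < pi j)%N).

From mathcomp Require Import all_boot all_order all_fingroup.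
Set Implicit Arguments. Unset Strict Implicit. Unset Printing Implicit Defensive.

(* Call a vertex uniform in a graph if it is adjacent to all other vertices
   (sign +1) or to none (sign -1).  A threshold graph on at least two vertices
   has uniform vertices, and they all have the same sign.  In T(pi, w) the
   vertex pi_n is uniform of sign w_n, and every uniform vertex of sign w_n
   lies in the final run of w_n; in standard form labels increase along runs,
   so pi_n is the largest uniform vertex.  Peeling it off determines (pi, w)
   recursively, and since induced subgraphs of threshold graphs are threshold,
   the same peeling builds a pair in standard form. *)

Lemma sorted_enum_ordP n (R : rel 'I_n) :
  reflect (forall i j : 'I_n, val j = (val i).+1 -> R i j) (sorted R (enum 'I_n)).
Proof.
case: n R => [|m] R; first by rewrite enum_ord0; left; case.
apply: (iffP (sortedP ord0)); rewrite size_enum_ord => R_enum.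
  by move=> i j ji; have := R_enum i; rewrite -ji ltn_ord !nth_ord_enum; apply.
move=> k lt_km; have := R_enum (Ordinal (ltnW lt_km)) (Ordinal lt_km) erefl.
by rewrite -[k.+1]/(val (Ordinal lt_km)) -[k]/(val (Ordinal (ltnW lt_km))) !nth_ord_enum.
Qed.

Section ThresholdGraphs.
Variable n : nat.
Implicit Types (E : {set {set 'I_n}}) (V W : {set 'I_n}) (u v x : 'I_n) (b : bool)
  (pi : {perm 'I_n}) (w : {ffun 'I_n -> bool}).

Definition uniform E V v b := [forall u in V :\ v, ([set v; u] \in E) == b].

Lemma uniformP E V v b :
  reflect {in V :\ v, forall u, ([set v; u] \in E) = b} (uniform E V v b).
Proof. by apply: (iffP forall_inP) => vE u /vE; [move/eqP | move->]. Qed.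

Lemma uniform_sub E V W v b : W \subset V -> uniform E V v b -> uniform E W v b.
Proof.
move=> sWV /uniformP vE; apply/uniformP => u uW; apply: vE.
exact: subsetP (setSD _ sWV) u uW.
Qed.

Lemma uniform_sign_unique E V v1 v2 b1 b2 : 2 <= #|V| -> v1 \in V -> v2 \in V ->
  uniform E V v1 b1 -> uniform E V v2 b2 -> b1 = b2.
Proof.
move=> V2 v1V v2V /uniformP v1E /uniformP v2E.
have [v12|v12] := eqVneq v1 v2.
  subst v2; have /card_gt0P [u uV] : 0 < #|V :\ v1| by move: V2; rewrite (cardsD1 v1) v1V.
  by rewrite -(v1E u uV) v2E.
have v2_in : v2 \in V :\ v1 by rewrite !inE eq_sym v12 v2V.
have v1_in : v1 \in V :\ v2 by rewrite !inE v12 v1V.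
by rewrite -(v1E v2 v2_in) setUC v2E.
Qed.

Lemma uniform_extend E V v u b : u \in V :\ v ->
  uniform E V v b -> uniform E (V :\ v) u b -> uniform E V u b.
Proof.
move=> uVv /uniformP vE /uniformP uE; apply/uniformP => x.
rewrite !inE => /andP [xu xV].
have [->|xv] := eqVneq x v; first by rewrite setUC vE.
by rewrite uE // !inE xu xv.
Qed.

Lemma threshold_on_sub E V W : threshold_on E V -> W \subset V -> threshold_on E W.
Proof.
move=> tV; elim: tV W => [|V' v vV' _ IH vE] W.
  by rewrite subset0 => /eqP ->; constructor.
move=> sW; have sWv : W :\ v \subset V' by rewrite subDset.
have [vW|vW] := boolP (v \in W); last first.
  apply: IH; apply: subset_trans sWv; apply/subsetP => u uW.
  by rewrite !inE uW andbT; apply: contraNneq vW => <-.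
rewrite -(setD1K vW); constructor; first by rewrite setD11.
  exact: IH.
by case: vE => vE; [left|right] => u /(subsetP sWv); apply: vE.
Qed.

Lemma threshold_on_uniform E V : threshold_on E V -> V != set0 ->
  exists v b, (v \in V) && uniform E V v b.
Proof.
case=> [|V' v vV' _ vE _]; first by rewrite eqxx.
exists v; rewrite setU11 /=.
by case: vE => vE; [exists true | exists false]; apply/uniformP => u;
  rewrite setU1K // => /vE; [|move/negbTE].
Qed.

Lemma threshold_on_peel E V : threshold_on E V -> V != set0 ->
  exists v b, [/\ v \in V, uniform E V v b &
    forall u, u \in V :\ v -> uniform E (V :\ v) u b -> u < v].
Proof.
move=> tV /(threshold_on_uniform tV) [v0 [b v0_unif]].
pose A := [pred u | (u \in V) && uniform E V u b].
case: (@arg_maxnP _ v0 A val) => // v /andP [vV v_unif] v_max.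
exists v, b; split=> // u uVv u_unif.
have [uv uV] := setD1P uVv.
have u_le_v : u <= v by apply: v_max; rewrite /A /= uV (uniform_extend uVv).
by rewrite ltn_neqAle u_le_v andbT.
Qed.

Section ConstructionSequences.

Implicit Types (y z : 'I_n * bool) (r t : seq ('I_n * bool)).

Definition verts r : {set 'I_n} := [set u | u \in map fst r].

Lemma verts_cons y r : verts (y :: r) = y.1 |: verts r.
Proof. by apply/setP => u; rewrite !inE. Qed.

Lemma verts1 y : verts [:: y] = [set y.1].
Proof. by apply/setP => u; rewrite !inE. Qed.

Lemma card_verts r : uniq (map fst r) -> #|verts r| = size r.
Proof. by move=> r_uniq; rewrite cardsE (card_uniqP r_uniq) size_map. Qed.

(* Construction sequences list the vertices with their signs, the most recently
   added vertex first. *)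
Fixpoint builds E r : bool :=
  if r is y :: r' then [&& y.1 \notin verts r', uniform E (verts r) y.1 y.2 & builds E r']
  else true.

Lemma builds_uniq E r : builds E r -> uniq (map fst r).
Proof. by elim: r => //= y r IH /and3P [yr _ /IH ->]; rewrite andbT; move: yr; rewrite inE. Qed.

Lemma builds_behead E y r : builds E (y :: r) -> builds E r.
Proof. by case/and3P. Qed.

Lemma builds_head_uniform E y r : builds E (y :: r) -> uniform E (verts (y :: r)) y.1 y.2.
Proof. by case/and3P. Qed.

Lemma verts_behead E y r : builds E (y :: r) -> verts r = verts (y :: r) :\ y.1.
Proof. by case/and3P => yr _ _; rewrite verts_cons setU1K. Qed.

Lemma builds_agree E1 E2 r : builds E1 r -> builds E2 r ->
  {in verts r &, forall u x, u != x -> ([set u; x] \in E1) = ([set u; x] \in E2)}.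
Proof.
elim: r => [|y r IH] /=; first by move=> _ _ u; rewrite inE.
case/and3P=> yr /uniformP y1 b1 /and3P [_ /uniformP y2 b2] u x.
have inD a : a \in verts r -> a \in verts (y :: r) :\ y.1 by rewrite verts_cons setU1K.
rewrite !verts_cons => /setU1P [-> | ur] /setU1P [-> | xr]; rewrite ?eqxx // => ux.
- by rewrite y1 ?y2 ?inD.
- by rewrite setUC y1 ?y2 ?inD.
- exact: IH.
Qed.


Definition std_step y z := (y.2 == z.2) ==> (z.1 < y.1).

(* [rev r] starts with the first two vertices added, whose signs must agree. *)
Definition standard r :=
  sorted std_step r && (if rev r is [:: a, b & _] then a.2 == b.2 else true).

Lemma standard_pair y z : standard [:: y; z] = std_step y z && (y.2 == z.2).
Proof. by rewrite /standard /= andbT eq_sym. Qed.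

Lemma standard_cons y z t : t != [::] ->
  standard [:: y, z & t] = std_step y z && standard (z :: t).
Proof.
move=> t0; rewrite /standard /= -!andbA; congr (_ && (_ && _)).
have : 1 < size (rev (z :: t)) by rewrite size_rev; case: t t0.
by rewrite (rev_cons y); case: (rev (z :: t)) => [|a [|b s]].
Qed.

(* [u] lies in the final run of the sign of [y], along which labels decrease. *)
Lemma uniform_le_head E y r : standard (y :: r) -> builds E (y :: r) -> r != [::] ->
  forall u, u \in verts (y :: r) -> uniform E (verts (y :: r)) u y.2 -> u <= y.1.
Proof.
elim: r y => // z t IH y yzt_std yzt_builds _ u.
have [-> //|uy] := eqVneq u y.1.
rewrite verts_cons => /setU1P [uy'|u_zt]; first by rewrite uy' eqxx in uy.
move=> /(uniform_sub (subsetUr [set y.1] _)) u_unif.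
have zt_builds := builds_behead yzt_builds.
have [t0|t0] := eqVneq t [::].
  move: yzt_std u_zt; rewrite t0 standard_pair verts1 inE => /andP [step /eqP yz] /eqP ->.
  by apply: ltnW; move: step; rewrite /std_step yz eqxx.
move: yzt_std; rewrite standard_cons // => /andP [step zt_std].
have zt_card : 1 < #|verts (z :: t)|.
  by rewrite (card_verts (builds_uniq zt_builds)) /= ltnS lt0n size_eq0.
have zV : z.1 \in verts (z :: t) by rewrite verts_cons setU11.
have yz : y.2 = z.2.
  exact: uniform_sign_unique zt_card u_zt zV u_unif (builds_head_uniform zt_builds).
have zy : z.1 < y.1 by move: step; rewrite /std_step yz eqxx.
by apply: leq_trans (ltnW zy); apply: IH; rewrite -?yz.
Qed.

Lemma standard_builds_head E y1 y2 r1 r2 :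
  standard (y1 :: r1) -> standard (y2 :: r2) -> builds E (y1 :: r1) -> builds E (y2 :: r2) ->
  r1 != [::] -> verts (y1 :: r1) = verts (y2 :: r2) -> y1 = y2.
Proof.
move=> std1 std2 b1 b2 r1_0 V12.
have card1 : 1 < #|verts (y1 :: r1)|.
  by rewrite (card_verts (builds_uniq b1)) /= ltnS lt0n size_eq0.
have r2_0 : r2 != [::].
  by move: card1; rewrite V12 (card_verts (builds_uniq b2)); case: r2 {std2 b2 V12}.
have y1V : y1.1 \in verts (y1 :: r1) by rewrite verts_cons setU11.
have y2V : y2.1 \in verts (y1 :: r1) by rewrite V12 verts_cons setU11.
have y2_unif : uniform E (verts (y1 :: r1)) y2.1 y2.2 by rewrite V12 builds_head_uniform.
have sign := uniform_sign_unique card1 y1V y2V (builds_head_uniform b1) y2_unif.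
have le21 : y2.1 <= y1.1 by apply: uniform_le_head std1 b1 r1_0 _ y2V _; rewrite sign.
have le12 : y1.1 <= y2.1.
  apply: uniform_le_head std2 b2 r2_0 _ _ _; rewrite -V12 //.
  by rewrite -sign builds_head_uniform.
have vertex : y1.1 = y2.1 by apply: val_inj; apply/eqP; rewrite eqn_leq le12 le21.
by rewrite [y1]surjective_pairing [y2]surjective_pairing vertex sign.
Qed.

Lemma standard_builds_unique E r1 r2 :
  standard r1 -> standard r2 -> builds E r1 -> builds E r2 -> 1 < size r1 ->
  verts r1 = verts r2 -> r1 = r2.
Proof.
elim: r1 r2 => [|y1 r1 IH] [|y2 r2] // std1 std2 b1 b2 size1 V12.
  by move: V12; rewrite verts_cons => /setP /(_ y1.1); rewrite setU11 inE.
have r1_0 : r1 != [::] by case: r1 size1 {IH std1 b1 V12}.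
have y12 := standard_builds_head std1 std2 b1 b2 r1_0 V12.
rewrite -y12 in std2 b2 V12 *; congr cons.
have {V12} Vt : verts r1 = verts r2 by rewrite (verts_behead b1) (verts_behead b2) V12.
move/builds_behead in b1; move/builds_behead in b2.
have size12 : size r2 = size r1.
  by rewrite -(card_verts (builds_uniq b1)) -(card_verts (builds_uniq b2)) Vt.
case: r1 => [|z1 [|x1 t1]] // in IH std1 b1 size1 Vt r1_0 size12 *;
  case: r2 => [|z2 [|x2 t2]] // in std2 Vt b2 size12 *.
  move: Vt std1 std2; rewrite !verts1 !standard_pair => /set1_inj z12.
  move=> /andP [_ /eqP z1_sign] /andP [_ /eqP z2_sign].
  by rewrite [z1]surjective_pairing [z2]surjective_pairing z12 -z1_sign -z2_sign.
move: std1 std2; rewrite [standard [:: y1, z1 & _]]standard_cons // => /andP [_ std1].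
rewrite standard_cons // => /andP [_ std2].
exact: IH.
Qed.

Lemma threshold_on_standard_builds E V : threshold_on E V -> 1 < #|V| ->
  exists r, [/\ standard r, builds E r & verts r = V].
Proof.
move cardV : #|V| => k; elim: k V cardV => [|[|k] IH] V cardV tV // _.
have V0 : V != set0 by rewrite -card_gt0 cardV.
have [v [b [vV v_unif v_max]]] := threshold_on_peel tV V0.
have {cardV} cardV' : #|V :\ v| = k.+1 by move: cardV; rewrite (cardsD1 v) vV => -[].
have head_step z : z.1 \in V :\ v -> uniform E (V :\ v) z.1 z.2 -> std_step (v, b) z.
  by move=> zV z_unif; apply/implyP => /= /eqP bz; apply: v_max; rewrite // bz.
have extend r' : builds E r' -> verts r' = V :\ v ->
    builds E ((v, b) :: r') /\ verts ((v, b) :: r') = V.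
  move=> b' Vr'; have Vr : verts ((v, b) :: r') = V by rewrite verts_cons Vr' setD1K.
  by rewrite /= Vr Vr' setD11 v_unif b'.
case: k IH cardV' => [|k] IH cardV'.
  have /cards1P [u Vv] : #|V :\ v| == 1 by rewrite cardV'.
  have u_unif : uniform E [set u] u b by apply/uniformP => x; rewrite setDv inE.
  have u_builds : builds E [:: (u, b)] by rewrite /= verts1 /= u_unif inE.
  have [b_r V_r] := extend _ u_builds (etrans (verts1 (u, b)) (esym Vv)).
  exists [:: (v, b); (u, b)]; split => //.
  by rewrite standard_pair eqxx andbT head_step // Vv ?set11.
have [r' [std' b' V']] := IH _ cardV' (threshold_on_sub tV (subsetDl _ _)) isT.
have [b_r V_r] := extend r' b' V'.
exists ((v, b) :: r'); split => //.
have size' : size r' = k.+2 by rewrite -(card_verts (builds_uniq b')) V'.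
case: r' std' b' V' size' {b_r V_r} => [|z [|x t]] // std' b' V' _.
have zV : z.1 \in verts [:: z, x & t] by rewrite verts_cons setU11.
by rewrite standard_cons // std' andbT head_step -?V' ?builds_head_uniform.
Qed.

End ConstructionSequences.

Section ThresholdPairs.
Variables (pi : {perm 'I_n}) (w : {ffun 'I_n -> bool}).

Definition steps : seq ('I_n * bool) := rev [seq (pi j, w j) | j <- enum 'I_n].

Lemma mem_T_pair (i j : 'I_n) : i < j -> ([set pi i; pi j] \in T pi w) = w j.
Proof.
move=> ij; apply/bigcupP/idP => [[k _]|wj]; last first.
  by exists j => //; rewrite /step_edges wj; apply/imsetP; exists i; rewrite ?inE.
rewrite /step_edges; case: ifP => [wk|_]; last by rewrite inE.
case/imsetP => i'; rewrite inE => i'k /setP e.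
have := e (pi j); rewrite !inE eqxx orbT !(inj_eq perm_inj) => /esym /orP [/eqP ji'|/eqP -> //].
have := e (pi k); rewrite !inE eqxx orbT !(inj_eq perm_inj) => /orP [/eqP ki|/eqP kj].
  by move: i'k; rewrite -ji' ki => /(ltn_trans ij); rewrite ltnn.
by move: i'k; rewrite -ji' kj ltnn.
Qed.

Lemma verts_map s : verts [seq (pi j, w j) | j <- s] = [set u in map pi s].
Proof. by apply/setP => u; rewrite !inE -map_comp. Qed.

Lemma builds_T_decreasing s :
  sorted (fun i j : 'I_n => j < i) s -> builds (T pi w) [seq (pi j, w j) | j <- s].
Proof.
elim: s => //= j s IH s_sorted.
have s_lt : all (fun i : 'I_n => i < j) s.
  by apply: order_path_min s_sorted => a b c ba cb; apply: ltn_trans cb ba.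
rewrite IH ?(path_sorted s_sorted) // andbT; apply/andP; split.
  rewrite verts_map inE (mem_map perm_inj); apply/negP => /(allP s_lt).
  by rewrite ltnn.
apply/uniformP => u; rewrite verts_cons verts_map !inE.
case/andP => u_j /orP [/eqP uj|/mapP [i i_s ->]]; first by rewrite uj eqxx in u_j.
by rewrite setUC mem_T_pair // (allP s_lt).
Qed.

Lemma builds_steps : builds (T pi w) steps.
Proof.
rewrite /steps -map_rev; apply: builds_T_decreasing.
by rewrite rev_sorted; apply/sorted_enum_ordP => i j ->.
Qed.

Lemma size_steps : size steps = n.
Proof. by rewrite size_rev size_map size_enum_ord. Qed.

Lemma verts_steps : verts steps = setT.
Proof.
apply/setP => u; rewrite /steps -map_rev verts_map !inE.
by apply/mapP; exists (pi^-1 u)%g; rewrite ?mem_rev ?mem_enum ?permKV.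
Qed.

Lemma standard_steps : standard steps <-> standard_form pi w.
Proof.
rewrite /standard /steps rev_sorted revK sorted_map.
have first_signs :
    is_true (if [seq (pi j, w j) | j <- enum 'I_n] is [:: a, b & _] then a.2 == b.2 else true)
    <-> (forall i j : 'I_n, val i = 0 -> val j = 1 -> w i = w j).
  have size_enum := size_enum_ord n.
  case E : (enum 'I_n) size_enum => [|a [|b s]] /= size_enum.
  1,2: by split=> // _ i j _ j1; exfalso; move: (ltn_ord j); rewrite j1 -size_enum.
  have n_gt1 : 1 < n by rewrite -(size_enum_ord n) E.
  have a0 : val a = 0 by rewrite -(nth_enum_ord a (ltnW n_gt1)) E.
  have b1 : val b = 1 by rewrite -(nth_enum_ord a n_gt1) E.
  split=> [/eqP wab i j i0 j1 | wab]; last by apply/eqP; apply: wab.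
  have -> : i = a by apply: ord_inj; rewrite i0 a0.
  by have -> : j = b by apply: ord_inj; rewrite j1 b1.
split=> [/andP [/sorted_enum_ordP srt fs] | [fs srt]].
  split; first exact: (iffLR first_signs fs).
  by move=> i j ji wij; move: (srt i j ji); rewrite /relpre /std_step /= wij eqxx.
rewrite (iffRL first_signs fs) andbT; apply/sorted_enum_ordP => i j ji.
by rewrite /relpre /std_step /=; apply/implyP => /eqP wji; apply: srt.
Qed.

End ThresholdPairs.

Lemma steps_inj pi1 w1 pi2 w2 : steps pi1 w1 = steps pi2 w2 -> (pi1, w1) = (pi2, w2).
Proof.
move/(congr1 rev); rewrite !revK => /eq_in_map same.
have {}same j : (pi1 j, w1 j) = (pi2 j, w2 j) by apply: same; rewrite mem_enum.
by congr pair; [apply/permP | apply/ffunP] => j; case: (same j).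
Qed.

Lemma steps_surj (x0 : 'I_n * bool) r : uniq (map fst r) -> size r = n ->
  exists pi w, steps pi w = r.
Proof.
move=> r_uniq r_size; pose q := rev r.
have q_uniq : uniq (map fst q) by rewrite map_rev rev_uniq.
have q_size : size q = n by rewrite size_rev.
have fst_inj : injective (fun j : 'I_n => (nth x0 q j).1).
  move=> j k /eqP; rewrite -!(nth_map x0 x0.1) ?q_size // nth_uniq ?size_map ?q_size //.
  by move/eqP/val_inj.
exists (perm fst_inj), [ffun j : 'I_n => (nth x0 q j).2].
rewrite /steps -[r]revK; congr rev.
transitivity (mkseq (nth x0 q) (size q)); last exact: mkseq_nth.
rewrite /mkseq q_size -val_enum_ord -map_comp; apply: eq_map => j.
by rewrite /= permE ffunE -surjective_pairing.
Qed.

Lemma simple_graph_T pi w : simple_graph (T pi w).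
Proof.
move=> e /bigcupP [j _]; rewrite /step_edges; case: ifP => _; last by rewrite inE.
case/imsetP => i; rewrite inE => ij ->; apply/eqP/cards2P; exists (pi i), (pi j).
by split=> //; rewrite (inj_eq perm_inj); apply: contraTneq ij => ->; rewrite ltnn.
Qed.

Lemma simple_graph_eq E1 E2 : simple_graph E1 -> simple_graph E2 ->
  (forall u x, u != x -> ([set u; x] \in E1) = ([set u; x] \in E2)) -> E1 = E2.
Proof.
move=> E1_simple E2_simple E12; apply/setP => e.
have edge_pair E : simple_graph E -> e \in E -> exists u x, u != x /\ e = [set u; x].
  by move=> E_simple /E_simple /eqP /cards2P.
apply/idP/idP => [/[dup] /(edge_pair _ E1_simple) | /[dup] /(edge_pair _ E2_simple)].
  by move=> [u [x [ux ->]]]; rewrite E12.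
by move=> [u [x [ux ->]]]; rewrite E12.
Qed.

End ThresholdGraphs.

Theorem lemma2 (n : nat) (hn : (2 <= n)%N) (G : {set {set 'I_n}}) :
  threshold_graph G ->
  exists pw : {perm 'I_n} * {ffun 'I_n -> bool},
    [/\ standard_form pw.1 pw.2, G = T pw.1 pw.2 &
        forall (pi : {perm 'I_n}) (w : {ffun 'I_n -> bool}),
          standard_form pi w -> G = T pi w -> (pi, w) = pw].
Proof.
move=> [G_simple G_threshold].
have [r [r_std r_builds r_verts]] : exists r, [/\ standard r, builds G r & verts r = setT].
  by apply: threshold_on_standard_builds G_threshold _; rewrite cardsT card_ord.
have r_size : size r = n.
  by rewrite -(card_verts (builds_uniq r_builds)) r_verts cardsT card_ord.
have [pi [w r_steps]] := steps_surj (Ordinal (ltnW hn), true) (builds_uniq r_builds) r_size.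
have steps_unique pi' w' :
    standard_form pi' w' -> builds G (steps pi' w') -> steps pi' w' = r.
  move=> /standard_steps std' builds'.
  by apply: standard_builds_unique std' r_std builds' r_builds _ _;
    rewrite ?size_steps ?verts_steps.
have built_by pi' w' : builds G (steps pi' w') -> G = T pi' w'.
  move=> builds'; apply: (simple_graph_eq G_simple) => [|u x]; first exact: simple_graph_T.
  by apply: (builds_agree builds' (builds_steps pi' w')); rewrite verts_steps inE.
exists (pi, w); split => /=.
- by apply/standard_steps; rewrite r_steps.
- by apply: built_by; rewrite r_steps.
move=> pi' w' std' G_T; apply: steps_inj; rewrite r_steps steps_unique //.
by rewrite G_T builds_steps.
Qed.
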